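(* Let $R$ be a $K$-algebra, $J$ an ideal of $R$ which is locally f.d.ss, and $T$ a finite dimensional semisimple subalgebra of $R$ such that $R = T \oplus J$ as $K$-vector spaces. Then $R$ is locally f.d.ss if and only if the following holds: for every finite subset $Y \subseteq J$ there is an idempotent $e \in J$ such that $Y \subseteq eJe$ and $et = te$ for all $t \in T$.
   Context: $K$ is a field. All algebras are associative but not necessarily unital $K$-algebras; ideals are two-sided ring ideals that are also $K$-subspaces. A $K$-algebra $R$ is locally f.d.ss if every finite subset of $R$ is contained in a subalgebra of $R$ that is a finite dimensional semisimple $K$-algebra. *)

From mathcomp Require Import all_boot all_algebra.
Set Implicit Arguments. Unset Strict Implicit. Unset Printing Implicit Defensive.
Import GRing.Theory.
Local Open Scope ring_scope.

Section NuAlg.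
Variables (K : fieldType) (V : lmodType K) (mul : V -> V -> V).

Definition is_nualg : Prop :=
  [/\ forall x y z, mul x (mul y z) = mul (mul x y) z,
      forall x y z, mul (x + y) z = mul x z + mul y z,
      forall x y z, mul x (y + z) = mul x y + mul x z,
      forall (a : K) x y, mul (a *: x) y = a *: mul x y
    & forall (a : K) x y, mul x (a *: y) = a *: mul x y].

Definition subset (A B : V -> Prop) : Prop := forall x, A x -> B x.

Definition seq_in (s : seq V) (A : V -> Prop) : Prop :=
  forall i, (i < size s)%N -> A (nth 0 s i).

Definition subspace (S : V -> Prop) : Prop :=
  [/\ S 0, forall x y, S x -> S y -> S (x + y)
    & forall (a : K) x, S x -> S (a *: x)].

Definition span (s : seq V) : V -> Prop :=
  fun x => exists c : 'I_(size s) -> K, x = \sum_(i < size s) c i *: nth 0 s i.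

Definition fin_dim (S : V -> Prop) : Prop :=
  exists s : seq V, forall x, S x <-> span s x.

Definition subalg (S : V -> Prop) : Prop :=
  subspace S /\ forall x y, S x -> S y -> S (mul x y).

Definition ideal_in (A I : V -> Prop) : Prop :=
  [/\ subspace I, subset I A
    & forall a x, A a -> I x -> I (mul a x) /\ I (mul x a)].

Definition nilpotent (I : V -> Prop) : Prop :=
  exists n : nat, forall (x : V) (s : seq V),
    I x -> seq_in s I -> size s = n -> foldl mul x s = 0.

(* semisimple (for a finite dimensional algebra A): its radical, the largest
   nilpotent ideal, is zero, i.e. A has no nonzero nilpotent ideal *)
Definition semisimple (A : V -> Prop) : Prop :=
  forall I, ideal_in A I -> nilpotent I -> forall x, I x -> x = 0.

Definition fdss (A : V -> Prop) : Prop :=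
  [/\ subalg A, fin_dim A & semisimple A].

Definition locally_fdss (A : V -> Prop) : Prop :=
  forall s : seq V, seq_in s A ->
    exists B : V -> Prop, [/\ fdss B, subset B A & seq_in s B].

End NuAlg.

(* If R is locally f.d.ss, put Y and a basis of T into a f.d. semisimple
   subalgebra B.  Every ideal of a f.d. semisimple (possibly non-unital)
   algebra has a unit element, so B /\ J has a unit e: it lies in J, fixes Y,
   and commutes with T because e t and t e both lie in B /\ J.
   Conversely, split each x_i = t_i + j_i, take e for the j_i, and a
   f.d. semisimple B inside J containing the j_i, e and e T.  Then
   eBe + (1 - e)T is a subalgebra, since the two summands annihilate each
   other; it is semisimple, as eBe is a corner of a semisimple algebra and
   (1 - e)T a homomorphic image of T; and it contains
   x_i = (j_i + e t_i) + (t_i - e t_i).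
   Units of ideals come from idempotents: a nonzero left ideal contains a
   minimal one, which contains a nonzero idempotent, and an idempotent e of I
   that is not a right unit can be enlarged by one taken from I (1 - e). *)

From Pilot Require Import Defs.
From mathcomp Require Import all_boot all_algebra.
From Stdlib Require Import Classical Inverse_Image.
Import Pilot.Defs.
Set Implicit Arguments. Unset Strict Implicit. Unset Printing Implicit Defensive.
Import GRing.Theory.
Local Open Scope ring_scope.

Lemma linear_morphisms (K : fieldType) (U W : lmodType K) (f : U -> W) : linear f ->
  [/\ f 0 = 0, {morph f : x y / x + y}, {morph f : x y / x - y}
    & forall a, {morph f : x / a *: x}].
Proof.
move=> fL; have fB : {morph f : x y / x - y} := zmod_morphism_linear fL.
have f0 : f 0 = 0 by rewrite -{1}(subrr 0) fB subrr.
split=> // [x y | a x]; last exact: (scalable_linear fL).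
have fN z : f (- z) = - f z by rewrite -sub0r fB f0 sub0r.
by rewrite -{1}[y]opprK fB fN opprK.
Qed.

Section Subspaces.
Variables (K : fieldType) (V : lmodType K).
Implicit Types (A B P Q : V -> Prop) (s : seq V) (f : V -> V).

Definition image f A : V -> Prop := fun y => exists2 x, A x & y = f x.

Definition sumset A B : V -> Prop := fun y => exists a b, [/\ A a, B b & y = a + b].

Definition strict_subspace A Q P :=
  [/\ subspace Q, subspace P, subset Q P, subset P A & exists2 x, P x & ~ Q x].

Lemma seq_in_cons x s A : seq_in (x :: s) A <-> A x /\ seq_in s A.
Proof.
split=> [H | [Ax Hs] [|i] //= /Hs //].
by split=> [|i lti]; [exact: (H 0%N) | exact: (H i.+1)].
Qed.

Lemma seq_in_cat s1 s2 A : seq_in (s1 ++ s2) A <-> seq_in s1 A /\ seq_in s2 A.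
Proof.
elim: s1 => [|x s1 IH] /=; first by split=> [|[]] // H i; rewrite nth_nil.
by rewrite !seq_in_cons IH; split=> [[? []] | [[? ?] ?]].
Qed.

Lemma seq_in_map f s A : seq_in (map f s) A <-> seq_in s (fun x => A (f x)).
Proof.
split=> H i lti; last by rewrite size_map in lti; rewrite (nth_map 0) //; exact: H.
by have := H i; rewrite size_map (nth_map 0) //; apply.
Qed.

Lemma seq_in_nseq n x A : A x -> seq_in (nseq n x) A.
Proof. by move=> Ax i; rewrite size_nseq => lti; rewrite nth_nseq lti. Qed.

Lemma seq_in_sub s A B : subset A B -> seq_in s A -> seq_in s B.
Proof. by move=> sAB Hs i /Hs /sAB. Qed.

Lemma seq_in_sumset X A B : seq_in X (sumset A B) ->
  exists ts js, [/\ size ts = size X, size js = size X, seq_in ts A, seq_in js B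
                   & forall i, X`_i = ts`_i + js`_i].
Proof.
elim: X => [_ | x X IH /seq_in_cons [[t [j [At Bj ->]]] /IH]].
  by exists [::], [::]; split=> // i; rewrite !nth_nil addr0.
case=> ts [js [sts sjs Ats Bjs Xtj]]; exists (t :: ts), (j :: js).
by split=> /=; rewrite ?sts ?sjs //; [apply/seq_in_cons | apply/seq_in_cons | case].
Qed.

Lemma subspaceN P x : subspace P -> P x -> P (- x).
Proof. by case=> _ _ PZ Px; rewrite -scaleN1r; apply: PZ. Qed.

Lemma subspaceB P x y : subspace P -> P x -> P y -> P (x - y).
Proof. by move=> sP Px Py; case: (sP) => _ PD _; apply: PD => //; apply: subspaceN. Qed.

Lemma subspace_sum P (I : eqType) (r : seq I) (F : I -> V) :
  subspace P -> (forall i, i \in r -> P (F i)) -> P (\sum_(i <- r) F i).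
Proof. by case=> P0 PD _ PF; rewrite big_seq; elim/big_ind: _ => // i /PF. Qed.

Lemma span_subset P s : subspace P -> seq_in s P -> subset (span s) P.
Proof.
move=> sP Hs x [c ->]; apply: (subspace_sum sP) => i _.
by case: sP => _ _ PZ; apply/PZ/Hs.
Qed.

Lemma subspace_image f A : linear f -> subspace A -> subspace (image f A).
Proof.
case/linear_morphisms=> f0 fD _ fZ [A0 AD AZ]; split; first by exists 0.
  by move=> _ _ [x Ax ->] [y Ay ->]; exists (x + y); rewrite ?fD //; apply: AD.
by move=> a _ [x Ax ->]; exists (a *: x); rewrite ?fZ //; apply: AZ.
Qed.

Lemma subspace_preimage f A : linear f -> subspace A -> subspace (fun x => A (f x)).
Proof.
case/linear_morphisms=> f0 fD _ fZ [A0 AD AZ].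
by split=> [|x y Ax Ay|a x Ax]; rewrite ?f0 ?fD ?fZ //; [apply: AD | apply: AZ].
Qed.

Lemma subspace_sumset A B : subspace A -> subspace B -> subspace (sumset A B).
Proof.
case=> A0 AD AZ [B0 BD BZ]; split; first by exists 0, 0; rewrite addr0.
  move=> _ _ [a [b [Aa Bb ->]]] [a' [b' [Aa' Bb' ->]]].
  by exists (a + a'), (b + b'); rewrite addrACA; split; [apply: AD | apply: BD |].
move=> k _ [a [b [Aa Bb ->]]]; exists (k *: a), (k *: b).
by rewrite scalerDr; split; [apply: AZ | apply: BZ |].
Qed.

(* [span] uses ordinal-indexed coefficients; nat-indexed ones are easier to reindex. *)
Lemma spanE s x : span s x <-> exists c : nat -> K, x = \sum_(i < size s) c i *: s`_i.
Proof.
split=> [[c ->] | [c ->]]; last by exists (fun i => c i).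
exists (fun k => if (insub k : option 'I_(size s)) is Some i then c i else 0).
by apply: eq_bigr => i _; rewrite valK.
Qed.

Lemma span_map f s : linear f -> forall y, span (map f s) y <-> image f (span s) y.
Proof.
case/linear_morphisms=> f0 fD _ fZ y; have fsum (c : nat -> K) :
    f (\sum_(i < size s) c i *: s`_i) = \sum_(i < size (map f s)) c i *: (map f s)`_i.
  rewrite size_map (big_morph f fD f0); apply: eq_bigr => i _.
  by rewrite fZ (nth_map 0).
rewrite spanE; split=> [[c ->] | [x /spanE [c ->] ->]]; last by exists c.
by exists (\sum_(i < size s) c i *: s`_i); [apply/spanE; exists c|].
Qed.

Lemma span_cat s1 s2 y : span (s1 ++ s2) y <-> sumset (span s1) (span s2) y.
Proof.
rewrite spanE; split=> [[c ->] | [_ [_ [/spanE [c1 ->] /spanE [c2 ->] ->]]]].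
  rewrite size_cat big_split_ord /=.
  exists (\sum_(i < size s1) c i *: s1`_i), (\sum_(i < size s2) c (size s1 + i)%N *: s2`_i).
  split; [by apply/spanE; exists c | by apply/spanE; exists (fun i => c (size s1 + i)%N) |].
  by congr (_ + _); apply: eq_bigr => i _; rewrite nth_cat /= ?ltn_ord // ltnNge leq_addr addKn.
exists (fun i => if (i < size s1)%N then c1 i else c2 (i - size s1)%N).
rewrite size_cat big_split_ord /=; congr (_ + _); apply: eq_bigr => i _.
  by rewrite ltn_ord nth_cat ltn_ord.
by rewrite ltnNge leq_addr /= nth_cat ltnNge leq_addr /= addKn.
Qed.

Lemma fin_dim_image f A : linear f -> fin_dim A -> fin_dim (image f A).
Proof.
move=> fL [s sA]; exists (map f s) => y; rewrite span_map //.
by split=> [[x /sA Ax ->] | [x /sA Ax ->]]; exists x.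
Qed.

Lemma fin_dim_sumset A B : fin_dim A -> fin_dim B -> fin_dim (sumset A B).
Proof.
move=> [s sA] [s' sB]; exists (s ++ s') => y; rewrite span_cat.
by split=> [[a [b [/sA Aa /sB Bb ->]]] | [a [b [/sA Aa /sB Bb ->]]]]; exists a, b.
Qed.

Lemma vspace_of_subspace (W : vectType K) (Q : W -> Prop) :
  subspace Q -> exists U : {vspace W}, forall x, x \in U <-> Q x.
Proof.
case=> Q0 QD QZ.
suff grow k (U : {vspace W}) : (forall x, x \in U -> Q x) ->
    (\dim {:W} - \dim U < k)%N -> exists U' : {vspace W}, forall x, x \in U' <-> Q x.
  apply: (grow (\dim {:W}).+1 0%VS); last by rewrite ltnS leq_subr.
  by move=> x; rewrite memv0 => /eqP ->.
elim: k U => // k IH U UQ; rewrite ltnS => codimU.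
have [[x Qx Ux] | full] := classic (exists2 x, Q x & x \notin U); last first.
  by exists U => x; split=> [/UQ // | Qx]; apply/negPn/negP => Ux; apply: full; exists x.
apply: (IH (U + <[x]>)%VS).
  by move=> _ /memv_addP [u /UQ Qu [_ /vlineP [a ->] ->]]; apply/QD/QZ.
have ltU : (\dim U < \dim (U + <[x]>))%N.
  rewrite (ltn_leqif (dimv_leqif_eq (addvSl U _))); apply: contraNneq Ux => ->.
  exact: subvP (addvSr U _) _ (memv_line x).
apply: leq_trans codimU; rewrite ltn_sub2l // (leq_trans ltU) //.
exact/dimvS/subvf.
Qed.

Lemma strict_subspace_wf A : fin_dim A -> well_founded (strict_subspace A).
Proof.
case=> s sA; pose n := size s.
pose f (c : 'rV[K]_n) := \sum_(i < n) c 0 i *: s`_i.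
have fL : linear f.
  move=> a c c'; rewrite /f scaler_sumr -big_split; apply: eq_bigr => i _.
  by rewrite !mxE scalerDl scalerA.
have [f0 fD _ fZ] := linear_morphisms fL.
have coords P : subspace P -> exists U : {vspace 'rV[K]_n}, forall c, c \in U <-> P (f c).
  case=> P0 PD PZ.
  apply: vspace_of_subspace; split=> [|c c'|a c]; rewrite ?f0 ?fD ?fZ //.
    exact: PD.
  exact: PZ.
have onto x : A x -> exists c, x = f c.
  by case/sA/spanE=> c ->; exists (\row_i c i); apply: eq_bigr => i _; rewrite mxE.
suff acc k P (U : {vspace 'rV[K]_n}) :
    (forall c, c \in U <-> P (f c)) -> (\dim U < k)%N -> Acc (strict_subspace A) P.
  move=> P; apply: Acc_intro => Q [sQ _ _ _ _]; have [U QU] := coords Q sQ.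
  exact: (acc (\dim U).+1 Q U).
elim: k P U => [|k IH] P U PU; first by rewrite ltn0.
rewrite ltnS => dimU.
apply: Acc_intro => Q [sQ _ QP PA [x Px Qx]]; have [U' QU'] := coords Q sQ.
apply: (IH Q U' QU'); apply: (leq_trans _ dimU).
have sU'U : (U' <= U)%VS by apply/subvP => c /QU' /QP /PU.
rewrite (ltn_leqif (dimv_leqif_eq sU'U)); apply/eqP => U'U.
have [c xE] := onto x (PA x Px).
by apply: Qx; rewrite xE; apply/QU'; rewrite U'U; apply/PU; rewrite -xE.
Qed.

End Subspaces.

(* The multiplication is bundled with its axioms, so that lemmas find them by
   unification and the opposite algebra [nualg_op] is again a [nualg]. *)
Record nualg (K : fieldType) (V : lmodType K) := NUAlg {
  nualg_mul :> V -> V -> V;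
  nualg_axiom : is_nualg nualg_mul
}.

Section NonUnitalAlgebra.
Variables (K : fieldType) (V : lmodType K) (m : nualg V).
Local Notation "x ** y" := (m x y) (at level 40, left associativity).
Implicit Types (A I L P : V -> Prop).

Lemma nmulA x y z : x ** (y ** z) = x ** y ** z. Proof. by case: (nualg_axiom m). Qed.
Lemma nmulDl x y z : (x + y) ** z = x ** z + y ** z. Proof. by case: (nualg_axiom m). Qed.
Lemma nmulDr x y z : x ** (y + z) = x ** y + x ** z. Proof. by case: (nualg_axiom m). Qed.
Lemma nmulZl (a : K) x y : (a *: x) ** y = a *: (x ** y). Proof. by case: (nualg_axiom m). Qed.
Lemma nmulZr (a : K) x y : x ** (a *: y) = a *: (x ** y). Proof. by case: (nualg_axiom m). Qed.

Lemma nmul0l x : 0 ** x = 0.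
Proof. by rewrite -(scale0r (0 : V)) nmulZl !scale0r. Qed.
Lemma nmul0r x : x ** 0 = 0.
Proof. by rewrite -(scale0r (0 : V)) nmulZr !scale0r. Qed.
Lemma nmulBl x y z : (x - y) ** z = x ** z - y ** z.
Proof. by rewrite nmulDl -scaleN1r nmulZl scaleN1r. Qed.
Lemma nmulBr x y z : x ** (y - z) = x ** y - x ** z.
Proof. by rewrite nmulDr -scaleN1r nmulZr scaleN1r. Qed.

Lemma nmul_suml (I : Type) (r : seq I) (F : I -> V) x :
  (\sum_(i <- r) F i) ** x = \sum_(i <- r) F i ** x.
Proof. by rewrite (big_morph (m^~ x) (fun y z => nmulDl y z x) (nmul0l x)). Qed.
Lemma nmul_sumr (I : Type) (r : seq I) (F : I -> V) x :
  x ** (\sum_(i <- r) F i) = \sum_(i <- r) x ** F i.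
Proof. by rewrite (big_morph (m x) (nmulDr x) (nmul0r x)). Qed.

Lemma nualg_op_axiom : is_nualg (fun x y => y ** x).
Proof. by split=> *; rewrite ?nmulA ?nmulDl ?nmulDr ?nmulZl ?nmulZr. Qed.

Definition nualg_op := NUAlg nualg_op_axiom.

Lemma subalg_op A : subalg m A -> subalg nualg_op A.
Proof. by case=> sA AM; split=> // x y Ax Ay; apply: AM. Qed.

Lemma ideal_in_op A I : ideal_in m A I -> ideal_in nualg_op A I.
Proof. by case=> sI IA IM; split=> // a x Aa Ix; have [] := IM a x Aa Ix. Qed.

Lemma linear_nmull a : linear (m a).
Proof. by move=> k u v; rewrite nmulDr nmulZr. Qed.

Lemma linear_nmulr a : linear (m^~ a).
Proof. by move=> k u v; rewrite nmulDl nmulZl. Qed.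

Lemma linear_sub_nmulr a : linear (fun y => y - y ** a).
Proof. by move=> k u v; rewrite nmulDl nmulZl opprD addrACA scalerBr. Qed.

Lemma linear_sub_nmull a : linear (fun y => y - a ** y).
Proof. by move=> k u v; rewrite nmulDr nmulZr opprD addrACA scalerBr. Qed.

Definition sums P : V -> Prop :=
  fun x => exists2 s : seq V, (forall y, y \in s -> P y) & x = \sum_(y <- s) y.

Lemma sums_self P x : P x -> sums P x.
Proof. by move=> Px; exists [:: x]; [move=> y /[1!inE] /eqP -> | rewrite big_seq1]. Qed.

Lemma subspace_sums P : (forall a x, P x -> P (a *: x)) -> subspace (sums P).
Proof.
move=> PZ; split; first by exists [::]; rewrite ?big_nil.
  move=> _ _ [s Ps ->] [s' Ps' ->]; exists (s ++ s'); last by rewrite big_cat.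
  by move=> y; rewrite mem_cat => /orP [/Ps | /Ps'].
move=> a _ [s Ps ->]; exists (map ( *:%R a) s); last by rewrite big_map scaler_sumr.
by move=> _ /mapP [y /Ps Py ->]; apply: PZ.
Qed.

Lemma ideal_sums A P : subspace A -> subset P A -> (forall a x, P x -> P (a *: x)) ->
  (forall a x, A a -> P x -> P (a ** x) /\ P (x ** a)) -> ideal_in m A (sums P).
Proof.
move=> sA PA PZ PM; split; first exact: subspace_sums.
  by move=> _ [s Ps ->]; apply: (subspace_sum sA) => y /Ps /PA.
move=> a _ Aa [s Ps ->]; rewrite nmul_sumr nmul_suml; split.
  by exists (map (m a) s); [move=> _ /mapP [y /Ps /(PM a _ Aa) [] ? _ ->] | rewrite big_map].
by exists (map (m^~ a) s); [move=> _ /mapP [y /Ps /(PM a _ Aa) [] _ ? ->] | rewrite big_map].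
Qed.

Lemma sums_sqzero P : (forall x y, P x -> P y -> x ** y = 0) ->
  forall x y, sums P x -> sums P y -> x ** y = 0.
Proof.
move=> P2 _ _ [s Ps ->] [s' Ps' ->]; rewrite nmul_suml big1_seq // => x /andP [_ /Ps Px].
by rewrite nmul_sumr big1_seq // => y /andP [_ /Ps' Py]; apply: P2.
Qed.

Definition nonzero P := exists2 x, P x & x <> 0.

Definition lideal A L :=
  [/\ subspace L, subset L A & forall a x, A a -> L x -> L (a ** x)].

(* Weaker than [semisimple], but evidently invariant under [nualg_op]. *)
Definition no_sqzero_ideal A := forall I, ideal_in m A I ->
  (forall x y, I x -> I y -> x ** y = 0) -> forall x, I x -> x = 0.

Lemma semisimple_no_sqzero_ideal A : semisimple m A -> no_sqzero_ideal A.
Proof.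
move=> ssA I iI I2; apply: ssA iI _; exists 1%N => x [|y [|? ?]] // Ix Hs _.
by apply: I2 => //; apply: (Hs 0%N).
Qed.

Lemma no_sqzero_lideal A L : subalg m A -> no_sqzero_ideal A -> lideal A L ->
  (forall x y, L x -> L y -> x ** y = 0) -> forall x, L x -> x = 0.
Proof.
move=> [sA AM] nsA [[_ _ LZ] LA LM] L2 x Lx.
pose P y := L y \/ exists2 l, L l & exists2 a, A a & y = l ** a.
have PL p l : P p -> L l -> p ** l = 0.
  case=> [Lp | [l' Ll' [a Aa ->]]] Ll; first exact: L2.
  by rewrite -nmulA L2 //; apply: LM.
apply: (nsA (sums P)) (sums_self (or_introl Lx)).
  apply: ideal_sums => //.
  - by move=> y [/LA // | [l /LA Al [a Aa ->]]]; apply: AM.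
  - move=> k y [Ly | [l Ll [a Aa ->]]]; first by left; apply: LZ.
    by right; exists (k *: l); [apply: LZ | exists a; rewrite ?nmulZl].
  - move=> a y Aa [Ly | [l Ll [b Ab ->]]]; split.
    + by left; apply: LM.
    + by right; exists y => //; exists a.
    + by right; exists (a ** l); [apply: LM | exists b; rewrite ?nmulA].
    + by right; exists l => //; exists (b ** a); [apply: AM | rewrite nmulA].
apply: sums_sqzero => p q Pp [Lq | [l Ll [a Aa ->]]]; first exact: PL.
by rewrite nmulA (PL p l) // nmul0l.
Qed.

Definition minimal_lideal A P :=
  [/\ lideal A P, nonzero P & forall L, lideal A L -> subset L P -> nonzero L -> subset P L].

Lemma minimal_lideal_exists A L : fin_dim A -> lideal A L -> nonzero L ->
  exists2 P, minimal_lideal A P & subset P L.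
Proof.
move=> fA; elim/(well_founded_ind (strict_subspace_wf fA)): L => L IH lL nzL.
have [[L1 [lL1 sL1L nzL1 nsLL1]] | minL] :=
  classic (exists L1, [/\ lideal A L1, subset L1 L, nonzero L1 & ~ subset L L1]).
  have [y Ly L1y] : exists2 x, L x & ~ L1 x.
    by apply: NNPP => H; apply: nsLL1 => x Lx; apply: NNPP => L1x; apply: H; exists x.
  have [|P minP sPL1] := IH L1 _ lL1 nzL1; last by exists P => // x /sPL1 /sL1L.
  by case: lL1 lL => sL1 _ _ [sL LA _]; split=> //; exists y.
exists L => //; split=> // L1 lL1 sL1L nzL1 x Lx; apply: NNPP => L1x; apply: minL.
by exists L1; split=> // sLL1; exact: L1x (sLL1 x Lx).
Qed.

Lemma minimal_lideal_idempotent A P : subalg m A -> no_sqzero_ideal A ->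
  minimal_lideal A P -> exists e, [/\ P e, e ** e = e & e <> 0].
Proof.
move=> sA nsA [lP [x0 Px0 nx0] minP]; have [[P0 PD PZ] PA PM] := lP.
have [a [b [Pa Pb ba]]] : exists a b, [/\ P a, P b & b ** a <> 0].
  apply: NNPP => H; apply/nx0/(no_sqzero_lideal sA nsA lP _ Px0) => x y Px Py.
  by apply: NNPP => xy; apply: H; exists y, x.
have lPa : lideal A (image (m^~ a) P).
  split; [exact/subspace_image/(And3 P0 PD PZ)/linear_nmulr | |].
  - by move=> _ [l Pl ->]; exact: PA _ (PM _ _ (PA _ Pl) Pa).
  - by move=> c _ Ac [l Pl ->]; exists (c ** l); rewrite ?nmulA //; apply: PM.
have [e Pe ea] : image (m^~ a) P a.
  apply: (minP _ lPa) => //; first by move=> _ [l Pl ->]; exact: PM _ _ (PA _ Pl) Pa.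
  by exists (b ** a) => //; exists b.
pose Ka y := P y /\ y ** a = 0.
have lKa : lideal A Ka.
  split; [split | by move=> y [/PA] |].
  - by split; rewrite ?nmul0l.
  - by move=> y z [Py ya] [Pz za]; split; [apply: PD | rewrite nmulDl ya za addr0].
  - by move=> k y [Py ya]; split; [apply: PZ | rewrite nmulZl ya scaler0].
  - by move=> c y Ac [Py ya]; split; [apply: PM | rewrite -nmulA ya nmul0r].
have Ka0 y : Ka y -> y = 0.
  move=> Kay; apply: NNPP => ny.
  by have [_ ba0] := minP Ka lKa (fun _ => @proj1 _ _) (ex_intro2 _ _ y Kay ny) b Pb.
exists e; split=> //; last by move=> e0; apply: ba; rewrite ea e0 nmul0l nmul0r.
apply/eqP; rewrite -subr_eq0; apply/eqP/Ka0; split.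
  by apply: (subspaceB (And3 P0 PD PZ)) => //; exact: PM _ _ (PA _ Pe) Pe.
by rewrite nmulBl -nmulA -!ea subrr.
Qed.

(* [I (1 - e)], written without a unit *)
Definition right_peirce I e := image (fun y => y - y ** e) I.

(* Enlarge [e] by a nonzero idempotent orthogonal to it, taken from a minimal
   left ideal inside [I (1 - e)]. *)
Lemma right_peirce_shrink A I e : subalg m A -> fin_dim A -> no_sqzero_ideal A ->
  ideal_in m A I -> I e -> e ** e = e -> nonzero (right_peirce I e) ->
  exists e', [/\ I e', e' ** e' = e'
                & strict_subspace A (right_peirce I e') (right_peirce I e)].
Proof.
move=> sA fA nsA [sI IA IM] Ie ee nzM.
have IMr a x : A a -> I x -> I (x ** a) by move=> Aa Ix; case: (IM a x Aa Ix).
have sM f : subspace (right_peirce I f) by exact: subspace_image (linear_sub_nmulr f) sI.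
have MI f : I f -> subset (right_peirce I f) I.
  by move=> If _ [y Iy ->]; apply: (subspaceB sI) => //; exact: IMr _ _ (IA f If) Iy.
have lM : lideal A (right_peirce I e).
  split=> // [x /(MI e Ie) /IA // | c _ Ac [y Iy ->]].
  by exists (c ** y); [case: (IM c y Ac Iy) | rewrite nmulBr nmulA].
have [P minP sPM] := minimal_lideal_exists fA lM nzM.
have [f [/sPM Mf ff nf]] := minimal_lideal_idempotent sA nsA minP.
have If := MI e Ie f Mf.
have fe : f ** e = 0 by case: Mf => y _ ->; rewrite nmulBl -nmulA ee subrr.
pose g := f - e ** f.
have Ig : I g by apply: (subspaceB sI) => //; case: (IM e f (IA e Ie) If).
have ge : g ** e = 0 by rewrite nmulBl -nmulA fe nmul0r subrr.
have eg : e ** g = 0 by rewrite nmulBr nmulA ee subrr.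
have fg : f ** g = f by rewrite nmulBr ff nmulA fe nmul0l subr0.
have gg : g ** g = g by rewrite {1}/g nmulBl -nmulA fg.
have ng : g <> 0.
  move=> /eqP; rewrite subr_eq0 => /eqP fef; apply: nf.
  by rewrite -ff {2}fef nmulA fe nmul0l.
clearbody g.
have e'e' : (e + g) ** (e + g) = e + g.
  by rewrite nmulDl !nmulDr ee eg ge gg addr0 add0r.
exists (e + g); split=> //; first by case: sI => _ ID _; apply: ID.
split; [exact: sM | exact: sM | | by move=> x /(MI e Ie) /IA |].
  move=> _ [u Iu ->]; exists (u - u ** g).
    by apply: (subspaceB sI) => //; exact: IMr _ _ (IA g Ig) Iu.
  by rewrite nmulBl -nmulA ge nmul0r subr0 nmulDr opprD addrAC addrA.
exists g; first by exists g; rewrite ?ge ?subr0.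
have ge' : g ** (e + g) = g by rewrite nmulDr ge gg add0r.
case=> u _ gE; apply: ng; rewrite -ge' {1}gE.
by rewrite nmulBl -nmulA e'e' subrr.
Qed.

Lemma ideal_right_unit A I : subalg m A -> fin_dim A -> no_sqzero_ideal A ->
  ideal_in m A I -> exists e, [/\ I e, e ** e = e & forall x, I x -> x ** e = x].
Proof.
move=> sA fA nsA iI; have [[I0 _ _] _ _] := iI.
suff: forall e, I e -> e ** e = e ->
    exists e', [/\ I e', e' ** e' = e' & forall x, I x -> x ** e' = x].
  by move=> /(_ 0 I0); rewrite nmul0l; apply.
have wfM := wf_inverse_image _ _ _ (right_peirce I) (strict_subspace_wf fA).
elim/(well_founded_ind wfM) => e IH Ie ee.
have [nzM | zM] := classic (nonzero (right_peirce I e)).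
  have [e' [Ie' e'e' ltM]] := right_peirce_shrink sA fA nsA iI Ie ee nzM.
  exact: IH e' ltM Ie' e'e'.
exists e; split=> // x Ix; apply: NNPP => nx; apply: zM.
by exists (x - x ** e); [exists x | move/eqP; rewrite subr_eq0 eq_sym => /eqP].
Qed.

End NonUnitalAlgebra.

Lemma no_sqzero_ideal_op (K : fieldType) (V : lmodType K) (m : nualg V) A :
  no_sqzero_ideal m A -> no_sqzero_ideal (nualg_op m) A.
Proof.
move=> nsA I /(@ideal_in_op _ _ (nualg_op m)) iI I2.
by apply: nsA iI _ => x y Ix Iy; apply: I2.
Qed.

Lemma ideal_unit (K : fieldType) (V : lmodType K) (m : nualg V) (A I : V -> Prop) :
  subalg m A -> fin_dim A -> semisimple m A -> ideal_in m A I ->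
  exists e, [/\ I e, m e e = e & forall x, I x -> m e x = x /\ m x e = x].
Proof.
move=> sA fA /semisimple_no_sqzero_ideal nsA iI.
have [e [Ie ee xe]] := ideal_right_unit sA fA nsA iI.
have [f [If _ fx]] :=
  ideal_right_unit (subalg_op sA) fA (no_sqzero_ideal_op nsA) (ideal_in_op iI).
(* [f] is a left unit of [I], so [f = f e = e]. *)
have fe : f = e by rewrite -(xe f If); exact: fx e Ie.
by exists e; split=> // x Ix; rewrite -{1}fe; split; [exact: fx | exact: xe].
Qed.

Section Constructions.
Variables (K : fieldType) (V : lmodType K) (m : nualg V).
Local Notation "x ** y" := (m x y) (at level 40, left associativity).
Implicit Types (A B C I S T : V -> Prop).

Lemma subalg_ideal A : subalg m A -> ideal_in m A A.
Proof. by case=> sA AM; split=> // a x Aa Ax; split; apply: AM. Qed.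

Lemma ideal_in_meet B C I : subalg m C -> subset C B -> ideal_in m B I ->
  ideal_in m C (fun y => I y /\ C y).
Proof.
move=> [[C0 CD CZ] CM] CB [[I0 ID IZ] IB IM]; split.
- by split=> // [x y [Ix Cx] [Iy Cy] | a x [Ix Cx]]; split; auto.
- by move=> x [].
- move=> a x Ca [Ix Cx]; have [Iax Ixa] := IM a x (CB a Ca) Ix.
  by split; split=> //; apply: CM.
Qed.

Lemma nilpotent_sub I J : subset J I -> nilpotent m I -> nilpotent m J.
Proof. by move=> JI [n nilI]; exists n => x s /JI Ix /(seq_in_sub JI); apply: nilI. Qed.

Lemma ideal_foldl A I x s : ideal_in m A I -> I x -> seq_in s A -> I (foldl m x s).
Proof.
case=> _ _ IM; elim: s x => [|y s IH] x Ix //= /seq_in_cons [Ay As].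
by apply: IH => //; case: (IM y x Ay Ix).
Qed.

Lemma foldl_nmul_morph A f x s : subalg m A ->
  (forall a b, A a -> A b -> f (a ** b) = f a ** f b) ->
  A x -> seq_in s A -> f (foldl m x s) = foldl m (f x) (map f s).
Proof.
move=> [_ AM] fM; elim: s x => [|y s IH] x Ax //= /seq_in_cons [Ay As].
by rewrite IH ?fM //; apply: AM.
Qed.

Lemma foldl_nmul_fix x w n : x ** w = x -> foldl m x (nseq n w) = x.
Proof. by move=> xw; elim: n => //= n IH; rewrite xw. Qed.

Lemma ideal_unit_central A I z : ideal_in m A I -> I z ->
  (forall x, I x -> z ** x = x /\ x ** z = x) -> forall a, A a -> a ** z = z ** a.
Proof.
case=> _ _ IM Iz zI a Aa; have [Iaz Iza] := IM a z Aa Iz.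
by rewrite -(proj1 (zI _ Iaz)) nmulA (proj2 (zI _ Iza)).
Qed.

Lemma semisimple_corner B e : subalg m B -> fin_dim B -> semisimple m B ->
  B e -> e ** e = e -> semisimple m (image (fun x => e ** x ** e) B).
Proof.
move=> sB fB ssB Be ee I iI [n nilI] x Ix.
have [[B0 BD BZ] BM] := sB; have [sI IC IM] := iI.
have IB y : I y -> B y by case/IC=> b Bb ->; exact: BM _ _ (BM _ _ Be Bb) Be.
have eIe y : I y -> e ** y = y /\ y ** e = y.
  by case/IC=> b _ ->; split; [rewrite !nmulA ee | rewrite -nmulA ee].
have [u [Bu _ uB]] := ideal_unit sB fB ssB (subalg_ideal sB).
pose P y := exists b i c, [/\ B b, I i, B c & y = b ** i ** c].
have iBIB : ideal_in m B (sums P).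
  apply: ideal_sums => //.
  - by move=> _ [b [i [c [Bb /IB Bi Bc ->]]]]; exact: BM _ _ (BM _ _ Bb Bi) Bc.
  - move=> k _ [b [i [c [Bb Ii Bc ->]]]].
    by exists (k *: b), i, c; rewrite !nmulZl; split=> //; apply: BZ.
  - move=> a _ Ba [b [i [c [Bb Ii Bc ->]]]]; split.
      by exists (a ** b), i, c; rewrite !nmulA; split=> //; apply: BM.
    by exists b, i, (c ** a); rewrite !nmulA; split=> //; apply: BM.
have [f [[s Ps fE] _ fBIB]] := ideal_unit sB fB ssB iBIB.
(* [e f e] lies in [I] and is a right unit there, so [x = x (e f e)^n = 0]. *)
have Iefe : I (e ** f ** e).
  rewrite fE nmul_sumr nmul_suml; apply: (subspace_sum sI) => _ /Ps [b [i [c [Bb Ii Bc ->]]]].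
  have [ei ie] := eIe i Ii.
  have -> : e ** (b ** i ** c) ** e = e ** b ** e ** i ** (e ** c ** e).
    by rewrite -{1}ie -{1}ei !nmulA.
  have [+ _] := IM _ _ (ex_intro2 _ _ b Bb erefl) Ii.
  by move=> /(IM _ _ (ex_intro2 _ _ c Bc erefl)) [_].
have xefe : x ** (e ** f ** e) = x.
  have [ex xe] := eIe x Ix; have [ux xu] := uB x (IB x Ix).
  have Px : P x by exists u, x, u; rewrite ux xu.
  have [_ xf] := fBIB x (sums_self Px).
  by rewrite !nmulA xe xf xe.
rewrite -(foldl_nmul_fix n xefe); apply: nilI => //; last by rewrite size_nseq.
exact: seq_in_nseq.
Qed.

Lemma semisimple_hom_image A f : subalg m A -> fin_dim A -> semisimple m A ->
  linear f -> (forall a b, A a -> A b -> f (a ** b) = f a ** f b) ->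
  semisimple m (image f A).
Proof.
move=> sA fA ssA fL fM N iN [n nilN].
have [[A0 AD AZ] AM] := sA; have [sN NfA NM] := iN.
have [f0 fD fB fZ] := linear_morphisms fL.
pose Z a := A a /\ f a = 0.
have iZ : ideal_in m A Z.
  split; [split | by move=> a [] |].
  - by split.
  - by move=> a b [Aa fa] [Ab fb]; split; [apply: AD | rewrite fD fa fb addr0].
  - by move=> k a [Aa fa]; split; [apply: AZ | rewrite fZ fa scaler0].
  - by move=> b a Ab [Aa fa]; split; split; rewrite ?fM ?fa ?nmul0l ?nmul0r //; apply: AM.
have [z [[Az fz] _ zZ]] := ideal_unit sA fA ssA iZ.
have zc := ideal_unit_central iZ (conj Az fz) zZ.
have fsubz a : A a -> f (a - z ** a) = f a by move=> Aa; rewrite fB fM // fz nmul0l subr0.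
(* the part of [f^-1 N] complementary to the kernel: a nilpotent ideal of [A] *)
pose P := image (fun a => a - z ** a) (fun a => A a /\ N (f a)).
have iP : ideal_in m A P.
  split.
  - apply: subspace_image; first exact: linear_sub_nmull.
    have [N0 ND NZ] := sN.
    split=> [|a b [Aa Na] [Ab Nb] | k a [Aa Na]]; rewrite ?f0 ?fD ?fZ; split; auto.
  - by move=> _ [a [Aa _] ->]; apply: (subspaceB (And3 A0 AD AZ)) => //; apply: AM.
  - move=> b _ Ab [a [Aa Na] ->].
    have [Nba Nab] := NM (f b) (f a) (ex_intro2 _ _ b Ab erefl) Na.
    split.
      exists (b ** a); first by split; [apply: AM | rewrite fM].
      by rewrite nmulBr nmulA zc // -nmulA.
    exists (a ** b); first by split; [apply: AM | rewrite fM].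
    by rewrite nmulBl -nmulA.
have [_ PA _] := iP.
have P0 : forall w, P w -> w = 0.
  apply: (ssA P iP); exists n => w s Pw Ps sz.
  have As := seq_in_sub PA Ps.
  have fw0 : f (foldl m w s) = 0.
    rewrite (foldl_nmul_morph sA fM (PA _ Pw) As); apply: nilN; last by rewrite size_map.
      by case: Pw => a [Aa Na] ->; rewrite fsubz.
    by apply/seq_in_map/(seq_in_sub _ Ps) => _ [a [Aa Na] ->]; rewrite fsubz.
  case: (ideal_foldl iP Pw As) fw0 => a [Aa _] ->; rewrite fsubz // => fa.
  by rewrite (proj1 (zZ a (conj Aa fa))) subrr.
move=> x Nx; have [a Aa xE] := NfA x Nx.
by rewrite xE -fsubz // (P0 (a - z ** a)) ?f0 //; exists a => //; split=> //; rewrite -xE.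
Qed.

Lemma subalg_image A f : linear f -> subalg m A ->
  (forall x y, A x -> A y -> exists2 z, A z & f x ** f y = f z) -> subalg m (image f A).
Proof.
move=> fL [sA _] fM; split; first exact: subspace_image.
by move=> _ _ [x Ax ->] [y Ay ->]; have [z Az ->] := fM x y Ax Ay; exists z.
Qed.

Lemma subalg_sumset S T : subalg m S -> subalg m T ->
  (forall s t, S s -> T t -> s ** t = 0 /\ t ** s = 0) -> subalg m (sumset S T).
Proof.
move=> [sS SM] [sT TM] ST; split; first exact: subspace_sumset.
move=> _ _ [s [t [Ss Tt ->]]] [s' [t' [Ss' Tt' ->]]].
exists (s ** s'), (t ** t'); split; [exact: SM | exact: TM |].
have [st _] := ST s t' Ss Tt'; have [_ ts] := ST s' t Ss' Tt.
by rewrite nmulDl !nmulDr st ts addr0 add0r.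
Qed.

Lemma semisimple_sumset S T e : subalg m S -> subalg m T ->
  semisimple m S -> semisimple m T -> S e ->
  (forall s, S s -> e ** s = s) -> (forall t, T t -> e ** t = 0) ->
  semisimple m (sumset S T).
Proof.
move=> sS sT ssS ssT Se eS eT I iI nilI.
have [[S0 _ _] _] := sS; have [[T0 _ _] _] := sT; have [_ IST IM] := iI.
have SST : subset S (sumset S T) by move=> s Ss; exists s, 0; rewrite addr0.
have TST : subset T (sumset S T) by move=> t Tt; exists 0, t; rewrite add0r.
have nilIC C : nilpotent m (fun y => I y /\ C y).
  exact: nilpotent_sub (fun y => @proj1 _ _) nilI.
have IT y : I y -> T y.
  move=> Iy; have [s [t [Ss Tt yE]]] := IST y Iy.
  have [Iey _] := IM e y (SST e Se) Iy.
  have eyE : e ** y = s by rewrite yE nmulDr eS // eT // addr0.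
  have s0 : s = 0.
    by apply: (ssS _ (ideal_in_meet sS SST iI) (nilIC S)); split; rewrite // -eyE.
  by rewrite yE s0 add0r.
move=> x Ix; apply: (ssT _ (ideal_in_meet sT TST iI) (nilIC T)).
by split=> //; exact: IT.
Qed.

Lemma fdss_corner_sumset B T e : fdss m B -> fdss m T -> B e -> e ** e = e ->
  (forall t, T t -> e ** t = t ** e) ->
  fdss m (sumset (image (fun x => e ** x ** e) B) (image (fun t => t - e ** t) T)).
Proof.
move=> [sB fB ssB] [sT fT ssT] Be ee eT; have [_ BM] := sB; have [_ TM] := sT.
have corL : linear (fun x => e ** x ** e).
  by move=> k u v; rewrite nmulDr nmulDl nmulZr nmulZl.
have subL := linear_sub_nmull m e.
have subM a b : T a -> T b -> (a - e ** a) ** (b - e ** b) = a ** b - e ** (a ** b).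
  move=> Ta _; have eae : e ** a ** e = e ** a by rewrite -nmulA -eT // nmulA ee.
  by rewrite nmulBl !nmulBr !nmulA eae subrr subr0 -eT.
set S := image _ B; set T' := image _ T.
have sS : subalg m S.
  apply: subalg_image => // x y Bx By.
  exists (x ** e ** y); first exact: BM _ _ (BM _ _ Bx Be) By.
  by rewrite !nmulA -[e ** x ** e ** e]nmulA ee.
have sT' : subalg m T'.
  by apply: subalg_image => // a b Ta Tb; exists (a ** b); [apply: TM | apply: subM].
have eS s : S s -> e ** s = s /\ s ** e = s.
  by case=> x _ ->; split; [rewrite !nmulA ee | rewrite -nmulA ee].
have eT' t : T' t -> e ** t = 0 /\ t ** e = 0.
  case=> a Ta ->; rewrite nmulBr nmulA ee subrr; split=> //.
  by rewrite nmulBl -nmulA -eT // nmulA ee subrr.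
split.
- apply: subalg_sumset => // s t /eS [es se] /eT' [et te].
  by split; [rewrite -se -nmulA et nmul0r | rewrite -es nmulA te nmul0l].
- exact: fin_dim_sumset (fin_dim_image corL fB) (fin_dim_image subL fT).
- have Se : S e by exists e; rewrite ?ee.
  apply: (semisimple_sumset sS sT' _ _ Se).
  + exact: semisimple_corner.
  + by apply: semisimple_hom_image => // a b Ta Tb; rewrite subM.
  + by move=> s /eS [].
  + by move=> t /eT' [].
Qed.

Definition idempotent_corners J T := forall Y : seq V, seq_in Y J ->
  exists e, [/\ J e, e ** e = e,
    (forall i, (i < size Y)%N -> exists j, J j /\ nth 0 Y i = e ** j ** e)
  & forall t, T t -> e ** t = t ** e].

Lemma idempotent_corners_of_locally_fdss J T : ideal_in m (fun _ => True) J ->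
  fin_dim T -> locally_fdss m (fun _ => True) -> idempotent_corners J T.
Proof.
move=> iJ [bT TbT] locR Y YJ; have [_ _ JM] := iJ.
have [B [[sB fB ssB] _ /seq_in_cat [BY BbT]]] := locR (Y ++ bT) (fun _ _ => I).
have [_ BM] := sB; have TB : subset T B by move=> t /TbT; apply: (span_subset (proj1 sB) BbT).
have [e [[Je Be] ee eJB]] := ideal_unit sB fB ssB (ideal_in_meet sB (fun _ _ => I) iJ).
exists e; split=> // [i ltiY | t Tt].
  exists Y`_i; split; first exact: YJ.
  by have [-> ->] := eJB Y`_i (conj (YJ i ltiY) (BY i ltiY)).
have [Jte Jet] := JM t e I Je.
have [_ etE] := eJB (e ** t) (conj Jet (BM _ _ Be (TB t Tt))).
have [teE _] := eJB (t ** e) (conj Jte (BM _ _ (TB t Tt) Be)).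
by rewrite -etE -nmulA teE.
Qed.

Lemma locally_fdss_of_idempotent_corners J T : ideal_in m (fun _ => True) J ->
  locally_fdss m J -> fdss m T -> (forall x, sumset T J x) -> idempotent_corners J T ->
  locally_fdss m (fun _ => True).
Proof.
move=> iJ locJ fdT TJ corners X _; have [_ _ JM] := iJ; have [_ [bT TbT] _] := fdT.
have [ts [js [sts sjs Tts Jjs Xtj]]] := seq_in_sumset (fun i _ => TJ X`_i).
have [e [Je ee ejs eT]] := corners js Jjs.
have JebT : seq_in (map (m e) bT) J by apply/seq_in_map => i _; have [] := JM bT`_i e I Je.
have [B [fdB _ /seq_in_cat [Bjs /seq_in_cons [Be /seq_in_map BebT]]]] :=
  locJ (js ++ e :: map (m e) bT)
    (proj2 (seq_in_cat _ _ _) (conj Jjs (proj2 (seq_in_cons _ _ _) (conj Je JebT)))).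
have [[sB _] _ _] := fdB; have [_ BD _] := sB.
have BeT : subset T (fun t => B (e ** t)).
  by move=> t /TbT; apply: (span_subset (subspace_preimage (linear_nmull m e) sB) BebT).
exists (sumset (image (fun x => e ** x ** e) B) (image (fun t => t - e ** t) T)).
split; [exact: fdss_corner_sumset | by [] |].
move=> i ltiX; have ltit : (i < size ts)%N by rewrite sts.
have ltij : (i < size js)%N by rewrite sjs.
have [j' [_ jE]] := ejs i ltij; have Tt := Tts i ltit.
rewrite Xtj; set t := ts`_i; set j := js`_i in jE *.
have ej : e ** j = j by rewrite jE !nmulA ee.
have je : j ** e = j by rewrite jE -nmulA ee.
have ete : e ** t ** e = e ** t by rewrite -nmulA -eT // nmulA ee.
exists (j + e ** t), (t - e ** t); split; last by rewrite addrACA subrr addr0 addrC.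
  exists (j + e ** t); first by apply: BD; [exact: Bjs | exact: BeT].
  by rewrite nmulDr nmulDl ej je nmulA ee ete.
by exists t.
Qed.

End Constructions.

Theorem lemma4p2 (K : fieldType) (V : lmodType K) (mul : V -> V -> V)
  (J T : V -> Prop) :
  is_nualg mul ->
  ideal_in mul (fun _ => True) J ->
  locally_fdss mul J ->
  fdss mul T ->
  (forall x : V, exists t j, [/\ T t, J j & x = t + j]) ->
  (forall x : V, T x -> J x -> x = 0) ->
  (locally_fdss mul (fun _ => True) <->
   forall Y : seq V, seq_in Y J ->
     exists e : V, [/\ J e, mul e e = e,
       (forall i, (i < size Y)%N ->
          exists j, J j /\ nth 0 Y i = mul (mul e j) e)
     & forall t, T t -> mul e t = mul t e]).
Proof.
(* the sum [T + J] need not be direct *)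
move=> alg iJ locJ fdT TJ _; pose m := NUAlg alg; have [_ fT _] := fdT.
split=> [locR | corners].
  exact: (@idempotent_corners_of_locally_fdss _ _ m).
exact: (@locally_fdss_of_idempotent_corners _ _ m J T).
Qed.
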